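(* For every integer $n\ge 2$, the shift graph $S_n$ has symmetric difference at most $2$.
   Context: The shift graph $S_n$ has vertex set $\{(i,j): 1\le i<j\le n\}$, with $(i,j)$ adjacent to $(k,\ell)$ whenever $j=k$ or $i=\ell$. For a graph $G$ and distinct vertices $u,v$, $\mathrm{sd}_G(u,v) := |(N_G(u)\setminus\{v\}) \triangle (N_G(v)\setminus\{u\})|$. The symmetric difference of $G$ is $\max_H\min_{u\ne v\in V(H)}\mathrm{sd}_H(u,v)$, with $H$ ranging over induced subgraphs of $G$ having at least two vertices. *)

From mathcomp Require Import all_boot.
Set Implicit Arguments. Unset Strict Implicit. Unset Printing Implicit Defensive.

(* Vertices of the shift graph S_n: pairs (i,j) with 1 <= i < j <= n,
   encoded 0-based as i j : 'I_n with i < j. *)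
Definition shift_vertex (n : nat) := {p : 'I_n * 'I_n | p.1 < p.2}.

Definition shift_adj (n : nat) : rel (shift_vertex n) :=
  fun u v => ((val u).2 == (val v).1) || ((val u).1 == (val v).2).

Definition nbhd (T : finType) (adj : rel T) (X : {set T}) (u : T) : {set T} :=
  [set w in X | adj u w].

Definition sd (T : finType) (adj : rel T) (X : {set T}) (u v : T) : nat :=
  let A := nbhd adj X u :\ v in
  let B := nbhd adj X v :\ u in
  #|(A :\: B) :|: (B :\: A)|.

(* symmetric difference of G is at most k:
   max over induced subgraphs H with >= 2 vertices of
   min over distinct u v in H of sd_H(u,v) is <= k, i.e. every such H
   has two distinct vertices u, v with sd_H(u,v) <= k. *)
Definition sym_diff_at_most (T : finType) (adj : rel T) (k : nat) : Prop :=
  forall X : {set T}, 2 <= #|X| ->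
    exists u v, [/\ u \in X, v \in X, u != v & sd adj X u v <= k].

From mathcomp Require Import all_boot.
Set Implicit Arguments. Unset Strict Implicit. Unset Printing Implicit Defensive.

(* Read a vertex (i,j) of S_n as a step from time i to time j; two steps are
   adjacent when one ends where the other starts.  If two vertices of X end at
   a common time, take the least such time m and two vertices u, v ending at m:
   they have the same successors, and their predecessors end at the times
   s u, s v < m, where by minimality at most one vertex ends.  Reversing time
   handles two vertices with a common start.  Otherwise starts and ends are
   injective on X, so every vertex has at most two neighbours, and the vertex u
   with the least start has no predecessor, hence at most one neighbour v;
   pairing u with v (or with any vertex if u is isolated) gives sd <= 2. *)

Definition has_close_pair (T : finType) (adj : rel T) (X : {set T}) (k : nat) : Prop :=
  exists u v, [/\ u \in X, v \in X, u != v & sd adj X u v <= k].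

Definition fiber (T : finType) (f : T -> nat) (X : {set T}) (x : nat) : {set T} :=
  [set w in X | f w == x].

Lemma sd_ext (T : finType) (adj1 adj2 : rel T) (X : {set T}) (u v : T) :
  adj1 =2 adj2 -> sd adj1 X u v = sd adj2 X u v.
Proof.
move=> eq_adj; suff eq_nbhd w : nbhd adj1 X w = nbhd adj2 X w by rewrite /sd !eq_nbhd.
by apply/setP => z; rewrite !inE eq_adj.
Qed.

Lemma sd_leq (T : finType) (adj : rel T) (X S1 S2 : {set T}) (u v : T) :
  irreflexive adj ->
  {in X, forall w, adj u w -> ~~ adj v w -> w != v -> w \in S1} ->
  {in X, forall w, adj v w -> ~~ adj u w -> w != u -> w \in S2} ->
  sd adj X u v <= #|S1| + #|S2|.
Proof.
move=> irr in_S1 in_S2; rewrite /sd (leq_trans (leq_card_setU _ _).1) //.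
apply: leq_add; apply/subset_leq_card/subsetP => w; rewrite !inE.
- case/andP=> /negP not_nv /and3P [w_v wX u_w]; apply: in_S1 => //.
  apply/negP => v_w; apply: not_nv; rewrite wX v_w !andbT.
  by apply: (contraTneq _ u_w) => ->; rewrite irr.
- case/andP=> /negP not_nu /and3P [w_u wX v_w]; apply: in_S2 => //.
  apply/negP => u_w; apply: not_nu; rewrite wX u_w !andbT.
  by apply: (contraTneq _ v_w) => ->; rewrite irr.
Qed.

Lemma sd_leq_card_nbhd (T : finType) (adj : rel T) (X : {set T}) (u v : T) :
  irreflexive adj -> sd adj X u v <= #|nbhd adj X u :\ v| + #|nbhd adj X v :\ u|.
Proof. by move=> irr; apply: sd_leq => // w wX adj_w _ w_ne; rewrite !inE w_ne wX. Qed.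

Lemma card_fiber_le1 (T : finType) (f : T -> nat) (X : {set T}) (x : nat) :
  ~~ [exists u in X, 1 < #|fiber f X (f u)|] -> #|fiber f X x| <= 1.
Proof.
move=> small; have [-> | [w]] := set_0Vmem (fiber f X x); first by rewrite cards0.
rewrite inE => /andP [wX /eqP <-]; rewrite leqNgt.
by apply: contraNN small => big; apply/exists_inP; exists w.
Qed.

Lemma close_pair_ext (T : finType) (adj1 adj2 : rel T) (X : {set T}) (k : nat) :
  adj1 =2 adj2 -> has_close_pair adj1 X k -> has_close_pair adj2 X k.
Proof.
move=> eq_adj [u [v [uX vX u_ne_v sd_uv]]].
by exists u, v; rewrite -(sd_ext _ _ _ eq_adj).
Qed.

Section ShiftRelation.

Variables (T : finType) (s t : T -> nat).
Hypothesis s_lt_t : forall u, s u < t u.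

Definition shift_rel : rel T := fun u v => (t u == s v) || (s u == t v).

Lemma shift_rel_irr : irreflexive shift_rel.
Proof. by move=> u; rewrite /shift_rel eq_sym orbb (ltn_eqF (s_lt_t u)). Qed.

Lemma nbhd_shift_rel (X : {set T}) (w : T) :
  nbhd shift_rel X w = fiber s X (t w) :|: fiber t X (s w).
Proof. by apply/setP => z; rewrite !inE -andb_orr (eq_sym (s z)) (eq_sym (t z)). Qed.

Lemma shared_end_close_pair (X : {set T}) (u0 : T) :
  1 < #|fiber t X (t u0)| -> has_close_pair shift_rel X 2.
Proof.
move=> big_u0.
have [m big_m min_m] := ex_minnP (ex_intro (fun x => 1 < #|fiber t X x|) _ big_u0).
have small x : x < m -> #|fiber t X x| <= 1.
  by move=> lt_xm; rewrite leqNgt; apply: contraTN lt_xm => /min_m; rewrite -leqNgt.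
case/card_gt1P: big_m => u [v [+ + u_ne_v]].
rewrite !inE => /andP [uX /eqP tu] /andP [vX /eqP tv].
exists u, v; split => //.
apply: (leq_trans (sd_leq (S1 := fiber t X (s u)) (S2 := fiber t X (s v)) shift_rel_irr _ _)).
- move=> w wX /orP [/eqP tu_sw | /eqP su_tw] not_vw _; last by rewrite inE wX su_tw eqxx.
  by rewrite /shift_rel tv -tu tu_sw eqxx in not_vw.
- move=> w wX /orP [/eqP tv_sw | /eqP sv_tw] not_uw _; last by rewrite inE wX sv_tw eqxx.
  by rewrite /shift_rel tu -tv tv_sw eqxx in not_uw.
by rewrite -[2]/(1 + 1) leq_add // small //; [rewrite -tu | rewrite -tv]; apply: s_lt_t.
Qed.

Lemma injective_ends_close_pair (X : {set T}) :
  1 < #|X| -> (forall x, #|fiber s X x| <= 1) -> (forall x, #|fiber t X x| <= 1) ->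
  has_close_pair shift_rel X 2.
Proof.
move=> X_big small_s small_t.
have [a aX] : exists a, a \in X by apply/card_gt0P; apply: ltnW.
have [u uX min_u] := @arg_minnP _ a (fun w => w \in X) s aX.
have no_end : fiber t X (s u) = set0.
  apply/setP => w; rewrite !inE; apply/negbTE/andP => -[wX /eqP tw].
  by move: (s_lt_t w); rewrite tw ltnNge (min_u w wX).
have Nu_small : #|nbhd shift_rel X u| <= 1 by rewrite nbhd_shift_rel no_end setU0.
have [v [vX v_ne_u Nu_v]] : exists v, [/\ v \in X, v != u & nbhd shift_rel X u :\ v = set0].
  have [Nu0 | [v Nu_v]] := set_0Vmem (nbhd shift_rel X u).
    have : 0 < #|X :\ u| by move: X_big; rewrite (cardsD1 u) uX.
    by case/card_gt0P => v; rewrite !inE => /andP [v_ne_u vX]; exists v; rewrite Nu0 set0D.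
  move: (Nu_v); rewrite inE => /andP [vX uv]; exists v; split => //.
    by apply: contraTneq uv => ->; rewrite shift_rel_irr.
  by move: Nu_small; rewrite (cardsD1 v) Nu_v add1n ltnS leqn0 cards_eq0 => /eqP.
exists u, v; split; rewrite 1?eq_sym //.
apply: leq_trans (sd_leq_card_nbhd _ _ _ shift_rel_irr) _.
rewrite Nu_v cards0 add0n (leq_trans (subset_leq_card (subsetDl _ _))) //.
by rewrite nbhd_shift_rel (leq_trans (leq_card_setU _ _).1) // -[2]/(1 + 1) leq_add.
Qed.

End ShiftRelation.

Lemma shift_rel_rev (T : finType) (s t : T -> nat) (N : nat) :
  (forall u, s u < t u) -> (forall u, t u <= N) ->
  shift_rel (fun u => N - t u) (fun u => N - s u) =2 shift_rel s t.
Proof.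
move=> s_lt_t t_le u v.
have s_le w : s w <= N := leq_trans (ltnW (s_lt_t w)) (t_le w).
by rewrite /shift_rel orbC !eqn_sub2lE.
Qed.

Lemma shift_rel_sym_diff (T : finType) (s t : T -> nat) :
  (forall u, s u < t u) -> sym_diff_at_most (shift_rel s t) 2.
Proof.
move=> s_lt_t X X_big.
have [/exists_inP [u _ big_t] | small_t] := boolP [exists u in X, 1 < #|fiber t X (t u)|].
  exact: shared_end_close_pair big_t.
have [/exists_inP [u _ big_s] | small_s] := boolP [exists u in X, 1 < #|fiber s X (s u)|].
  pose N := \max_w t w; have t_le w : t w <= N := leq_bigmax w.
  apply: close_pair_ext (shift_rel_rev s_lt_t t_le) _.
  apply: (@shared_end_close_pair _ (fun w => N - t w) (fun w => N - s w) _ X u).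
    by move=> w; apply: ltn_sub2l (leq_trans (s_lt_t w) (t_le w)) (s_lt_t w).
  apply: leq_trans big_s (subset_leq_card _); apply/subsetP => w.
  by rewrite !inE => /andP [-> /eqP ->]; rewrite eqxx.
by apply: injective_ends_close_pair => // x; apply: card_fiber_le1.
Qed.

Theorem mainTheorem12 (n : nat) : 2 <= n -> sym_diff_at_most (@shift_adj n) 2.
Proof.
move=> _ X X_big.
pose s (u : shift_vertex n) : nat := (val u).1.
pose t (u : shift_vertex n) : nat := (val u).2.
have s_lt_t u : s u < t u := valP u.
have adjE : shift_rel s t =2 @shift_adj n by [].
exact: close_pair_ext adjE (@shift_rel_sym_diff _ s t s_lt_t X X_big).
Qed.
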